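(* There exists an uncountable semigroup $(S,+)$ which is very weakly cancellative, has no idempotent element, and in which every uncountable subset of $S$ is an IP set.
   Context: For an infinite semigroup $S$ of cardinality $\kappa$: a left solution set is a set $\{x\in S: a+x=b\}$ and a right solution set is a set $\{x\in S: x+a=b\}$ for some $a,b\in S$; $S$ is very weakly cancellative if the union of fewer than $\kappa$ left solution sets has cardinality less than $\kappa$ and the union of fewer than $\kappa$ right solution sets has cardinality less than $\kappa$. $e$ is idempotent if $e+e=e$. $A\subseteq S$ is an IP set if there is a sequence $\langle x_n\rangle_{n=1}^\infty$ in $S$ such that every finite sum $\sum_{n\in H}x_n$ (in increasing order of indices, $H$ a nonempty finite subset of $\mathbb{N}$) lies in $A$. *)

From HB Require Import structures.
From mathcomp Require Import all_boot all_order.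
From mathcomp Require Import boolp classical_sets functions cardinality.
Set Implicit Arguments. Unset Strict Implicit. Unset Printing Implicit Defensive.
Local Open Scope classical_set_scope.
Local Open Scope card_scope.

Definition card_lt T U (A : set T) (B : set U) : Prop := A #<= B /\ ~ (B #<= A).

Definition left_sol (S : Type) (op : S -> S -> S) (a b : S) : set S :=
  [set x | op a x = b].
Definition right_sol (S : Type) (op : S -> S -> S) (a b : S) : set S :=
  [set x | op x a = b].

(* A family of fewer than kappa = |S| solution sets is given by a set P of
   parameter pairs (a,b) with |P| < |S|; its union is the union over P. *)
Definition very_weakly_cancellative (S : Type) (op : S -> S -> S) : Prop :=
  forall P : set (S * S), card_lt P [set: S] ->
    card_lt (\bigcup_(p in P) left_sol op p.1 p.2) [set: S] /\
    card_lt (\bigcup_(p in P) right_sol op p.1 p.2) [set: S].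

Definition idempotent_elt (S : Type) (op : S -> S -> S) (e : S) : Prop :=
  op e e = e.

Fixpoint fsum (S : Type) (op : S -> S -> S) (x : nat -> S) (n : nat)
  (H : seq nat) : S :=
  match H with
  | [::] => x n
  | m :: H' => op (x n) (fsum op x m H')
  end.

(* H is represented as a strictly increasing list n :: H'. *)
Definition IP_set (S : Type) (op : S -> S -> S) (A : set S) : Prop :=
  exists x : nat -> S, forall (n : nat) (H : seq nat),
    sorted ltn (n :: H) -> A (fsum op x n H).

(* Let S = omega1 * nat, where (x, n) stands for n + 1 copies of the level x,
   and let a sum keep only the copies at its highest level: the summand of
   larger level wins, and (x, n) + (x, m) = (x, n + m + 1).  A sum of terms of pairwise
   distinct levels is one of its terms, so every set meeting infinitely many
   levels, in particular every uncountable set, is an IP set.  A solution of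
   a + x = b is b itself or lies at a level below that of a, so solution sets
   are countable; and since omega1 * nat, ordered lexicographically, is
   well-founded with countable initial segments, it injects into every
   uncountable set, so that "fewer than |S|" means "countably many".
   omega1 is realised as the elements with countably many predecessors in a
   well-order of nat -> bool. *)

From HB Require Import structures.
From mathcomp Require Import all_boot all_order.
From mathcomp Require Import boolp classical_sets functions cardinality wochoice.
From Stdlib Require Import ClassicalEpsilon Inverse_Image.
Set Implicit Arguments. Unset Strict Implicit. Unset Printing Implicit Defensive.
Import Order.Def Order.TTheory.
Local Open Scope classical_set_scope.
Local Open Scope card_scope.
Local Open Scope order_scope.

Section TopAdd.
Context {d : Order.disp_t} {X : orderType d}.
Implicit Types (a b c : X * nat) (x : X).

Definition weight a x : nat := if a.1 == x then a.2.+1 else 0.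

Definition top_add a b : X * nat :=
  let m := max a.1 b.1 in (m, (weight a m + weight b m).-1).

Lemma weight_top_add a b x : max a.1 b.1 <= x ->
  weight (top_add a b) x = weight a x + weight b x.
Proof.
rewrite {1}/weight /=; case: eqP => [<- _ | /eqP neq_mx le_mx].
  by rewrite prednK // /weight; case: leP => _; rewrite eqxx ?addnS.
have lt_mx : max a.1 b.1 < x by rewrite lt_neqAle neq_mx.
by rewrite /weight !lt_eqF //; move: lt_mx; rewrite gt_max => /andP[].
Qed.

Lemma top_addC : commutative top_add.
Proof. by move=> a b; rewrite /top_add maxC addnC. Qed.

Lemma top_addA : associative top_add.
Proof.
move=> a b c; rewrite /top_add /= maxA !weight_top_add ?addnA //.
- by rewrite le_max lexx.
- by rewrite -maxA le_max lexx orbT.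
Qed.

Lemma top_add_not_idempotent a : top_add a a <> a.
Proof.
case: a => x n; rewrite /top_add maxxx /weight eqxx addSn /= => -[] /eqP.
by rewrite -{3}[n]addn0 eqn_add2l.
Qed.

Lemma top_add_lt a b : a.1 < b.1 -> top_add a b = b.
Proof.
move=> lt_ab; rewrite /top_add /weight (max_r (ltW lt_ab)) (lt_eqF lt_ab) eqxx.
by case: b lt_ab.
Qed.

Lemma top_add_selective a b : a.1 != b.1 -> top_add a b = a \/ top_add a b = b.
Proof.
case: ltgtP => // [lt_ab|lt_ba] _; first by right; apply: top_add_lt.
by left; rewrite top_addC top_add_lt.
Qed.

Lemma fsum_top_add (x : nat -> X * nat) n H : injective (fun i => (x i).1) ->
  uniq (n :: H) -> exists2 k, k \in n :: H & fsum top_add x n H = x k.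
Proof.
move=> x_inj; elim: H n => [|m H IH] n /=; first by exists n; rewrite ?mem_seq1.
move=> /andP[nH /IH[k kH ->]].
have neq_nk : (x n).1 != (x k).1.
  by apply: contraNneq nH => /x_inj ->.
case: (top_add_selective neq_nk) => ->; [exists n | exists k] => //.
- exact: mem_head.
- by rewrite inE kH orbT.
Qed.

Lemma IP_set_top_add (A : set (X * nat)) : infinite_set (fst @` A) -> IP_set top_add A.
Proof.
move=> /infiniteP/card_leP[f].
have /all_sig2[x Ax x_lvl] n : {a | A a & a.1 = val (f (to_setT n))}.
  exact: cid2 (set_valP (f (to_setT n))).
have x_inj : injective (fun n => (x n).1).
  move=> i j; rewrite /= !x_lvl => /val_inj/inj.
  by move=> /(_ (mem_set I) (mem_set I))/(congr1 val).
exists x => n H /(sorted_uniq ltn_trans ltnn) uH.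
by have [k _ ->] := fsum_top_add x_inj uH.
Qed.

Lemma uncountable_infinite_fst (A : set (X * nat)) :
  ~ countable A -> infinite_set (fst @` A).
Proof.
move=> ncA /finite_set_countable cA; apply: ncA.
apply: sub_countable (countableX cA (countableP [set: nat])).
by apply: subset_card_le => a Aa; split=> //; exists a.
Qed.

End TopAdd.

Lemma countableU T (A B : set T) : countable A -> countable B -> countable (A `|` B).
Proof.
move=> cA cB; rewrite -bigcup2inE; apply: bigcup_countable => // -[|[|]] //.
Qed.

Section WellFoundedCountableSegments.
Context {d : Order.disp_t}.

Lemma uncountable_countable_segments (T : porderType d) :
  well_founded (fun x y : T => x < y) -> ~ countable [set: T] ->
  ~ countable [set t : T | countable [set u | u < t]].
Proof.
move=> wfT ncT cW; apply/ncT/(sub_countable _ cW)/subset_card_le => t _.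
elim/(well_founded_induction wfT): t => t IHt.
exact: sub_countable (subset_card_le IHt) cW.
Qed.

Lemma card_le_uncountable (Z : orderType d) U (P : set U) :
  well_founded (fun x y : Z => x < y) -> (forall z : Z, countable [set y | y < z]) ->
  ~ countable P -> [set: Z] #<= P.
Proof.
move=> wfZ segZ ncP.
have [y0 _] : P !=set0 by apply/set0P/eqP => P0; apply: ncP; rewrite P0.
(* g z is a point of P outside the countable set g @` [set y | y < z]. *)
pose fresh (z : Z) (g : forall y, y < z -> U) :=
  epsilon (inhabits y0) (fun u => P u /\ forall y (lt_yz : y < z), g y lt_yz <> u).
pose g := Fix wfZ (fun _ => U) fresh.
have g_fix z : g z = fresh z (fun y _ => g y).
  rewrite /g Fix_eq // => {}z g1 g2 eq_g; suff -> : g1 = g2 by [].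
  by apply: functional_extensionality_dep => y;
    apply: functional_extensionality_dep => lt_yz; apply: eq_g.
have g_fresh z : P (g z) /\ forall y, y < z -> g y <> g z.
  rewrite g_fix.
  apply: (epsilon_spec _ (fun u => P u /\ forall y, y < z -> g y <> u)).
  apply: contrapT => /forallNP none; apply: ncP.
  apply: sub_countable (sub_countable (card_image_le g _) (segZ z)).
  apply: subset_card_le => u Pu; apply: contrapT => gu.
  by apply: (none u); split=> // y lt_yz gyu; apply: gu; exists y.
have [h] : $|{injfun [set: Z] >-> P}|.
  apply/injfunPex; exists g => [z _|a b _ _ eq_g]; first by case: (g_fresh z).
  case: (ltgtP a b) => // lt_ab; exfalso.
  - exact: (g_fresh b).2 a lt_ab eq_g.
  - exact: (g_fresh a).2 b lt_ab (esym eq_g).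
exact: inj_card_le h.
Qed.

End WellFoundedCountableSegments.

Section VeryWeaklyCancellative.
Context {d : Order.disp_t} {X : orderType d}.
Hypotheses (wfX : well_founded (fun x y : X => x < y))
  (segX : forall x : X, countable [set y | y < x]) (ncX : ~ countable [set: X]).

Lemma countable_le_segment (x : X) : countable [set y | y <= x].
Proof.
have -> : [set y | y <= x] = [set y | y < x] `|` [set x].
  apply/seteqP; split=> y /=; first by rewrite le_eqVlt => /orP[/eqP|]; [right|left].
  by case=> [/ltW|->].
exact: countableU (segX x) (countable1 x).
Qed.

Lemma wf_lexi_nat : well_founded (fun u v : X *l nat => u < v).
Proof.
move=> [x n]; elim/(well_founded_induction wfX): x n => x IHx n.
elim/ltn_ind: n => n IHn; constructor => -[y m].
rewrite ltxi_pair => /andP[].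
rewrite le_eqVlt => /orP[/eqP -> | lt_yx _]; last exact: IHx.
by rewrite lexx => /IHn.
Qed.

Lemma countable_lexi_nat_segment (u : X *l nat) : countable [set v | v < u].
Proof.
apply: sub_countable (countableX (countable_le_segment u.1) (countableP [set: nat])).
by apply: subset_card_le => v /= /andP[le_vu _].
Qed.

Lemma uncountable_prod_nat : ~ countable [set: X * nat].
Proof.
move=> cS; apply/ncX/(sub_countable _ (sub_countable (card_image_le fst _) cS)).
by apply: subset_card_le => x _; exists (x, 0%N).
Qed.

Lemma countable_card_lt U (P : set U) : card_lt P [set: X * nat] -> countable P.
Proof.
move=> [_ not_le]; apply: contrapT => ncP; apply: not_le.
exact: (card_le_uncountable (Z := (X *l nat)%type)
  wf_lexi_nat countable_lexi_nat_segment ncP).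
Qed.

Lemma card_lt_countable (P : set (X * nat)) : countable P -> card_lt P [set: X * nat].
Proof.
move=> cP; split=> [|le_SP]; first exact: card_leT.
exact/uncountable_prod_nat/(card_le_trans le_SP).
Qed.

Lemma countable_left_sol (a b : X * nat) : countable (left_sol top_add a b).
Proof.
have cX := countableX (countable_le_segment (max a.1 b.1)) (countableP [set: nat]).
apply/(sub_countable _ cX)/subset_card_le => c /= eq_b; split=> //=.
case: (ltP a.1 c.1) => [lt_ac|le_ca].
- by rewrite -eq_b top_add_lt // le_max lexx orbT.
- by rewrite le_max le_ca.
Qed.

Lemma right_sol_top_add (a b : X * nat) : right_sol top_add a b = left_sol top_add a b.
Proof. by apply/funext => c; rewrite /right_sol /left_sol /= top_addC. Qed.

Lemma very_weakly_cancellative_top_add : very_weakly_cancellative (@top_add _ X).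
Proof.
move=> P /countable_card_lt cP.
by split; apply/card_lt_countable/bigcup_countable => // p _;
  rewrite ?right_sol_top_add; apply: countable_left_sol.
Qed.

End VeryWeaklyCancellative.

Lemma uncountable_bit_sequences : ~ countable [set: nat -> bool].
Proof.
move=> /countable_injP[f f_inj].
pose g := 'pinv_(fun=> fun=> false) [set: nat -> bool] f.
pose diag n := ~~ g n n.
have g_diag : g (f diag) = diag by apply: pinvKV; rewrite ?inE.
have := congr1 (fun s => s (f diag)) g_diag; set k := f diag => /=.
by rewrite /diag; case: (g k k).
Qed.

Definition wbits : Type := nat -> bool.
HB.instance Definition _ := Choice.on wbits.

Definition wbits_le : rel wbits := proj1_sig (well_ordering_principle wbits).

Lemma wbits_le_well_order : well_order wbits_le.
Proof. exact: proj2_sig (well_ordering_principle wbits). Qed.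

Lemma wbits_le_wo_chain : wo_chain wbits_le predT.
Proof. by move=> A _; apply: wbits_le_well_order. Qed.

Fact wbits_le_refl : reflexive wbits_le.
Proof. by move=> x; apply: (wo_chain_reflexive wbits_le_wo_chain). Qed.

Fact wbits_le_anti : antisymmetric wbits_le.
Proof. by move=> x y; apply: (wo_chain_antisymmetric wbits_le_wo_chain). Qed.

Fact wbits_le_total : total wbits_le.
Proof. by move=> x y; apply: (wo_chainW wbits_le_wo_chain). Qed.

Fact wbits_le_trans : transitive wbits_le.
Proof.
move=> y x z le_xy le_yz.
have /wbits_le_well_order[m [[m_xyz lb_m] _]] : nonempty [mem [:: x; y; z] : seq wbits].
  by exists x; apply: mem_head.
have [le_mx le_my le_mz] : [/\ wbits_le m x, wbits_le m y & wbits_le m z].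
  by split; apply: lb_m; rewrite !inE eqxx ?orbT.
move: m_xyz; rewrite !inE => /or3P[] /eqP eq_m; subst m => //.
- by have -> : x = y by apply: wbits_le_anti; rewrite le_xy le_mx.
- by have -> : z = y by apply: wbits_le_anti; rewrite le_yz le_my.
Qed.

HB.instance Definition _ := Order.Le_isPOrder.Build (Order.Disp tt tt) wbits
  wbits_le_refl wbits_le_anti wbits_le_trans.
HB.instance Definition _ :=
  Order.POrder_isTotal.Build (Order.Disp tt tt) wbits wbits_le_total.

Lemma wf_wbits : well_founded (fun x y : wbits => x < y).
Proof.
move=> x; apply: contrapT => not_acc.
have /wbits_le_well_order[m [[/[!inE] not_acc_m lb_m] _]] :
  nonempty [pred t : wbits | `[< ~ Acc (fun x y : wbits => x < y) t >]].
  by exists x; rewrite inE.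
apply: not_acc_m; constructor => y lt_ym; apply: contrapT => not_acc_y.
have le_my : wbits_le m y by apply: lb_m; rewrite inE.
move: lt_ym; rewrite lt_def => /andP[/eqP + le_ym]; apply.
by apply/wbits_le_anti/andP.
Qed.

Definition omega1 := {t : wbits | `[< countable [set u | u < t] >]}.
HB.instance Definition _ := [isSub of omega1 for val].
HB.instance Definition _ := [Choice of omega1 by <:].
HB.instance Definition _ :=
  [SubChoice_isSubOrder of omega1 by <: with Order.Disp tt tt].

Lemma uncountable_omega1 : ~ countable [set: omega1].
Proof.
move=> c; apply: (uncountable_countable_segments wf_wbits uncountable_bit_sequences).
apply: sub_countable (sub_countable (card_image_le val _) c).
by apply: subset_card_le => t /asboolT t_seg; exists (exist _ t t_seg).
Qed.

Lemma wf_omega1 : well_founded (fun x y : omega1 => x < y).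
Proof. exact: (wf_inverse_image _ _ _ val wf_wbits). Qed.

Lemma countable_omega1_segment (x : omega1) : countable [set y | y < x].
Proof.
have /countable_injP[f f_inj] := asboolW (valP x).
apply/countable_injP; exists (f \o val) => y z /[!inE] lt_yx lt_zx /f_inj eq_yz.
by apply/val_inj/eq_yz; rewrite inE.
Qed.

Theorem theorem2p7 :
  exists (S : Type) (op : S -> S -> S),
    associative op /\
    ~ countable [set: S] /\
    very_weakly_cancellative op /\
    (forall e : S, ~ idempotent_elt op e) /\
    (forall A : set S, ~ countable A -> IP_set op A).
Proof.
exists (omega1 * nat)%type, top_add.
split; first exact: top_addA.
split; first exact: uncountable_prod_nat uncountable_omega1.
split; first exact: very_weakly_cancellative_top_add
  wf_omega1 countable_omega1_segment uncountable_omega1.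
split; first exact: top_add_not_idempotent.
by move=> A /uncountable_infinite_fst; apply: IP_set_top_add.
Qed.
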